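(* Let $(M_0,d,\Gamma)$ be a cone-like space. Then the metric completion $\widehat{M_0}$ of $(M_0,d)$ satisfies that $\widehat{M_0}\setminus M_0$ consists of exactly one point $\omega$.
   Context: A cone-like space is a locally compact metric space $(M_0,d)$ together with a finitely generated, non-trivial group $\Gamma$ acting freely and properly discontinuously on $M_0$ by homotheties (i.e. for each $f\in\Gamma$ there is $\rho(f)>0$ with $d(f(x),f(y))=\rho(f)d(x,y)$ for all $x,y$), such that the identity is the only element of $\Gamma$ acting as an isometry, and such that the quotient $M_0/\Gamma$ is compact. *)

From Stdlib Require Import Reals List.
Open Scope R_scope.
Set Implicit Arguments.

Section MetricDefs.
Variable M : Type.
Variable d : M -> M -> R.

Definition is_metric : Prop :=
  (forall x y, 0 <= d x y) /\
  (forall x y, d x y = 0 <-> x = y) /\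
  (forall x y, d x y = d y x) /\
  (forall x y z, d x z <= d x y + d y z).

Definition open_set (U : M -> Prop) : Prop :=
  forall x, U x -> exists r, 0 < r /\ forall y, d x y < r -> U y.

Definition compact_set (K : M -> Prop) : Prop :=
  forall (I : Type) (U : I -> M -> Prop),
    (forall i, open_set (U i)) ->
    (forall x, K x -> exists i, U i x) ->
    exists l : list I, forall x, K x -> exists i, In i l /\ U i x.

Definition locally_compact : Prop :=
  forall x, exists V : M -> Prop, compact_set V /\
    exists r, 0 < r /\ forall y, d x y < r -> V y.

Definition cauchy (u : nat -> M) : Prop :=
  forall eps, 0 < eps -> exists N, forall n m, (N <= n)%nat -> (N <= m)%nat ->
    d (u n) (u m) < eps.

Definition converges (u : nat -> M) (l : M) : Prop :=
  forall eps, 0 < eps -> exists N, forall n, (N <= n)%nat -> d (u n) l < eps.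

Definition complete : Prop :=
  forall u, cauchy u -> exists l, converges u l.
End MetricDefs.

Definition is_completion (M X : Type) (d : M -> M -> R) (dX : X -> X -> R)
    (i : M -> X) : Prop :=
  is_metric dX /\ complete dX /\
  (forall x y, dX (i x) (i y) = d x y) /\
  (forall z eps, 0 < eps -> exists x, dX (i x) z < eps).

Definition is_group (G : Type) (mul : G -> G -> G) (inv : G -> G) (e : G) : Prop :=
  (forall a b c, mul a (mul b c) = mul (mul a b) c) /\
  (forall a, mul e a = a /\ mul a e = a) /\
  (forall a, mul (inv a) a = e /\ mul a (inv a) = e).

(* evaluation of a word in generators and their inverses (true = inverse) *)
Fixpoint word_eval (G : Type) (mul : G -> G -> G) (inv : G -> G) (e : G)
    (w : list (bool * G)) : G :=
  match w with
  | nil => e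
  | (b, s) :: w' => mul (if b then inv s else s) (word_eval mul inv e w')
  end.

Definition finitely_generated (G : Type) (mul : G -> G -> G) (inv : G -> G) (e : G)
  : Prop :=
  exists S : list G, forall g, exists w : list (bool * G),
    (forall p, In p w -> In (snd p) S) /\ g = word_eval mul inv e w.

Definition is_action (G M : Type) (mul : G -> G -> G) (e : G) (act : G -> M -> M)
  : Prop :=
  (forall x, act e x = x) /\ (forall g h x, act (mul g h) x = act g (act h x)).

Definition cone_like (M G : Type) (d : M -> M -> R)
    (mul : G -> G -> G) (inv : G -> G) (e : G) (act : G -> M -> M) : Prop :=
  is_metric d /\ locally_compact d /\
  is_group mul inv e /\ finitely_generated mul inv e /\ (exists g, g <> e) /\
  is_action mul e act /\
  (forall g, exists rho, 0 < rho /\ forall x y, d (act g x) (act g y) = rho * d x y) /\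
  (forall g x, act g x = x -> g = e) /\
  (forall K, compact_set d K -> exists l : list G,
      forall g, (exists x, K x /\ K (act g x)) -> In g l) /\
  (forall g, (forall x y, d (act g x) (act g y) = d x y) -> g = e) /\
  (* M0/Gamma compact: every cover by Gamma-invariant open sets (= open sets of
     the quotient topology) has a finite subcover *)
  (forall (I : Type) (U : I -> M -> Prop),
     (forall j, open_set d (U j)) ->
     (forall j g x, U j x -> U j (act g x)) ->
     (forall x, exists j, U j x) ->
     exists l : list I, forall x, exists j, In j l /\ U j x).

From Pilot Require Import Defs.
From Stdlib Require Import Reals List Lra Lia Classical.
Open Scope R_scope.
Set Implicit Arguments.

(* Since the group [G] acts by homotheties, each [g] has a ratio [rho g] and [rho]
   is a group homomorphism into the positive reals; it is injective because
   only the identity is an isometry, so [G] is abelian, and it contains an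
   element [h] with [rho h < 1].  The iterates [h^k x] form a Cauchy sequence
   whose limit [omega] in the completion does not depend on [x]; [omega] is
   not a point of [M] since [h] has no fixed point.
   Cocompactness gives finitely many balls [B(x_j, r_j)] with compact
   closures whose half-size translates [g B(x_j, r_j / 2)] cover [M].  If
   [x] lies in [g B(x_j, r_j / 2)], then (i) [x] is at distance
   [O(rho g)] from [omega], and (ii) for a boundary point [z], [rho g] is
   [O(d(x, z))], since otherwise [z] would be a limit of the compact set
   [g B(x_j, r_j)] and hence a point of [M].  Thus [d(z, omega) = O(d(x, z))]
   for every [x], and density of [M] forces [z = omega]. *)

Lemma list_upper_bound (T : Type) (l : list T) (f : T -> R) :
  exists B, 0 <= B /\ forall p, In p l -> f p <= B.
Proof.
  induction l as [|a l [B [B_nonneg B_bound]]].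
  - exists 0. split; [lra | intros p []].
  - exists (Rmax B (f a)). split.
    + eapply Rle_trans; [exact B_nonneg | apply Rmax_l].
    + intros p [<- | p_in]; [apply Rmax_r |].
      eapply Rle_trans; [apply B_bound, p_in | apply Rmax_l].
Qed.

Lemma list_positive_lower_bound (T : Type) (l : list T) (f : T -> R) :
  exists m, 0 < m /\ forall p, In p l -> 0 < f p -> m <= f p.
Proof.
  induction l as [|a l [m [m_pos m_bound]]].
  - exists 1. split; [lra | intros p []].
  - destruct (Rlt_dec 0 (f a)) as [fa_pos | fa_nonpos].
    + exists (Rmin m (f a)). split; [now apply Rmin_pos |].
      intros p [<- | p_in] fp_pos; [apply Rmin_r |].
      eapply Rle_trans; [apply Rmin_l | now apply m_bound].
    + exists m. split; [exact m_pos |].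
      intros p [<- | p_in] fp_pos; [contradiction | now apply m_bound].
Qed.

Lemma pow_vanish (q C eps : R) :
  0 <= q < 1 -> 0 <= C -> 0 < eps ->
  exists N, forall n, (N <= n)%nat -> q ^ n * C < eps.
Proof.
  intros q_range C_nonneg eps_pos.
  assert (q_abs : Rabs q < 1) by (rewrite Rabs_right; lra).
  assert (t_pos : 0 < eps / (C + 1)) by (apply Rdiv_lt_0_compat; lra).
  destruct (pow_lt_1_zero q q_abs _ t_pos) as [N HN].
  exists N. intros n Hn. specialize (HN n Hn).
  rewrite Rabs_right in HN by (apply Rle_ge, pow_le; lra).
  assert (t_eq : eps / (C + 1) * (C + 1) = eps) by (field; lra).
  assert (0 <= q ^ n) by (apply pow_le; lra).
  nra.
Qed.

Section Metric.
Variables (M : Type) (d : M -> M -> R).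
Hypothesis metric : is_metric d.

Lemma dist_nonneg x y : 0 <= d x y.
Proof. destruct metric as [H _]. apply H. Qed.

Lemma dist_sym x y : d x y = d y x.
Proof. destruct metric as (_ & _ & H & _). apply H. Qed.

Lemma dist_triangle x y z : d x z <= d x y + d y z.
Proof. destruct metric as (_ & _ & _ & H). apply H. Qed.

Lemma dist_self x : d x x = 0.
Proof. destruct metric as (_ & H & _). now apply H. Qed.

Lemma dist_le_zero x y : d x y <= 0 -> x = y.
Proof.
  intro H. destruct metric as (_ & Heq & _). apply Heq.
  apply Rle_antisym; [exact H | apply dist_nonneg].
Qed.

Lemma dist_pos x y : x <> y -> 0 < d x y.
Proof.
  intro xy. destruct (Rle_lt_dec (d x y) 0) as [H | H]; [| exact H].
  exfalso. now apply xy, dist_le_zero.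
Qed.

Lemma converges_unique (u : nat -> M) l1 l2 :
  converges d u l1 -> converges d u l2 -> l1 = l2.
Proof.
  intros lim1 lim2. apply dist_le_zero, Rle_plus_epsilon. intros eps eps_pos.
  destruct (lim1 (eps / 2)) as [N1 H1]; [lra |].
  destruct (lim2 (eps / 2)) as [N2 H2]; [lra |].
  specialize (H1 (Nat.max N1 N2) ltac:(lia)).
  specialize (H2 (Nat.max N1 N2) ltac:(lia)).
  pose proof (dist_triangle l1 (u (Nat.max N1 N2)) l2) as triangle.
  rewrite (dist_sym l1 (u _)) in triangle. lra.
Qed.

Lemma limit_dist_le (u : nat -> M) l a S :
  converges d u l -> (forall n, d a (u n) <= S) -> d a l <= S.
Proof.
  intros lim bound. apply Rle_plus_epsilon. intros eps eps_pos.
  destruct (lim eps eps_pos) as [N HN]. specialize (HN N (le_n N)).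
  pose proof (dist_triangle a (u N) l). pose proof (bound N). lra.
Qed.
End Metric.

Section CompactImage.
Variables (M X : Type) (d : M -> M -> R) (dX : X -> X -> R).
Hypotheses (metric : is_metric d) (metricX : is_metric dX).

Lemma compact_lipschitz_closed (K : M -> Prop) (f : M -> X) (L : R) (z : X) :
  0 <= L -> compact_set d K -> (forall p y, dX (f p) (f y) <= L * d p y) ->
  (forall eps, 0 < eps -> exists x, K x /\ dX (f x) z < eps) ->
  exists p, K p /\ f p = z.
Proof.
  intros L_nonneg K_compact lipschitz approach.
  destruct (classic (exists p, K p /\ f p = z)) as [H | not_reached]; [exact H | exfalso].
  (* Cover [K] by balls on which [f] stays away from [z]. *)
  pose (U := fun (pe : M * R) y =>
    0 < snd pe /\ 2 * snd pe <= dX (f (fst pe)) z /\ d (fst pe) y < snd pe / (L + 1)).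
  destruct (K_compact (M * R)%type U) as [l cover].
  - intros [p r] y [r_pos [r_gap y_near]]; simpl in *.
    exists (r / (L + 1) - d p y). split; [lra |]. intros w w_near.
    unfold U; simpl. pose proof (dist_triangle metric p y w). repeat split; lra.
  - intros y y_in. exists (y, dX (f y) z / 2).
    assert (gap : 0 < dX (f y) z)
      by (apply (dist_pos metricX); intro E; apply not_reached; now exists y).
    unfold U; simpl. rewrite (dist_self metric).
    repeat split; try lra. apply Rdiv_lt_0_compat; lra.
  - destruct (list_positive_lower_bound l snd) as [m [m_pos m_bound]].
    destruct (approach m m_pos) as [x [x_in x_close]].
    destruct (cover x x_in) as [[p r] [pr_in [r_pos [r_gap x_near]]]]; simpl in *.
    assert (m_le : m <= r) by (apply (m_bound (p, r)); auto).
    assert (r_eq : r / (L + 1) * (L + 1) = r) by (field; lra).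
    assert (near : d p x * (L + 1) < r) by (rewrite <- r_eq; apply Rmult_lt_compat_r; lra).
    pose proof (dist_nonneg metric p x). pose proof (lipschitz p x).
    pose proof (dist_triangle metricX (f p) (f x) z). nra.
Qed.
End CompactImage.

Section Homotheties.
Variables (M G : Type) (d : M -> M -> R).
Variables (mul : G -> G -> G) (inv : G -> G) (e : G) (act : G -> M -> M).
Hypotheses (metric : is_metric d) (group : is_group mul inv e) (action : is_action mul e act).
Hypothesis inhabited_M : inhabited M.
Hypothesis nontrivial : exists g, g <> e.
Hypothesis free : forall g x, act g x = x -> g = e.
Hypothesis homothety :
  forall g, exists r, 0 < r /\ forall x y, d (act g x) (act g y) = r * d x y.
Hypothesis rigid : forall g, (forall x y, d (act g x) (act g y) = d x y) -> g = e.

Lemma two_points : exists a b : M, a <> b.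
Proof.
  destruct inhabited_M as [a]. destruct nontrivial as [g g_ne].
  exists a, (act g a). intro E. apply g_ne, free with (x := a). now symmetry.
Qed.

Lemma ratio_exists : exists rho : G -> R,
  (forall g, 0 < rho g) /\ forall g x y, d (act g x) (act g y) = rho g * d x y.
Proof.
  destruct two_points as [a [b ab]]. pose proof (dist_pos metric ab) as ab_pos.
  exists (fun g => d (act g a) (act g b) / d a b). split.
  - intro g. destruct (homothety g) as [r [r_pos Hr]]. rewrite Hr.
    replace (r * d a b / d a b) with r by (field; lra). exact r_pos.
  - intros g x y. destruct (homothety g) as [r [_ Hr]]. rewrite !Hr. field. lra.
Qed.

Lemma ratio_unique r1 r2 : (forall x y, r1 * d x y = r2 * d x y) -> r1 = r2.
Proof.
  intro H. destruct two_points as [a [b ab]].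
  apply (Rmult_eq_reg_r (d a b)); [apply H | apply Rgt_not_eq, (dist_pos metric ab)].
Qed.

Variable rho : G -> R.
Hypotheses (rho_pos : forall g, 0 < rho g)
  (rho_hom : forall g x y, d (act g x) (act g y) = rho g * d x y).

Lemma ratio_mul g f : rho (mul g f) = rho g * rho f.
Proof.
  destruct action as [_ act_mul]. apply ratio_unique. intros x y.
  rewrite <- rho_hom, !act_mul, !rho_hom. ring.
Qed.

Lemma ratio_id : rho e = 1.
Proof.
  destruct action as [act_id _]. apply ratio_unique. intros x y.
  rewrite <- rho_hom, !act_id. ring.
Qed.

Lemma ratio_inv g : rho (inv g) * rho g = 1.
Proof.
  destruct group as (_ & _ & inverse). rewrite <- ratio_mul.
  destruct (inverse g) as [-> _]. apply ratio_id.
Qed.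

(* Only the identity is an isometry, so [rho] is injective. *)
Lemma ratio_injective a b : rho a = rho b -> a = b.
Proof.
  destruct group as (assoc & unit & inverse). intro ab.
  assert (isometric : mul a (inv b) = e).
  { apply rigid. intros x y. rewrite rho_hom, ratio_mul, ab, <- ratio_mul.
    destruct (inverse b) as [_ ->]. rewrite ratio_id. ring. }
  transitivity (mul (mul a (inv b)) b).
  - rewrite <- assoc. destruct (inverse b) as [-> _]. now destruct (unit a) as [_ ->].
  - rewrite isometric. now destruct (unit b) as [-> _].
Qed.

(* Hence [G] embeds in the multiplicative group of the reals: it is abelian. *)
Lemma act_comm g f x : act g (act f x) = act f (act g x).
Proof.
  destruct action as [_ act_mul]. rewrite <- !act_mul.
  replace (mul g f) with (mul f g); [reflexivity |].
  apply ratio_injective. rewrite !ratio_mul. ring.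
Qed.

Lemma act_inv_r g x : act g (act (inv g) x) = x.
Proof.
  destruct action as [act_id act_mul]. destruct group as (_ & _ & inverse).
  rewrite <- act_mul. destruct (inverse g) as [_ ->]. apply act_id.
Qed.

Lemma contracting_element : exists h, rho h < 1.
Proof.
  destruct nontrivial as [g g_ne].
  destruct (Rlt_dec (rho g) 1) as [lt | ge]; [now exists g |].
  exists (inv g).
  assert (rho g <> 1) by (intro E; apply g_ne, ratio_injective; now rewrite ratio_id).
  pose proof (ratio_inv g). pose proof (rho_pos (inv g)). nra.
Qed.

Section Contraction.
Variable h : G.
Hypothesis contracting : rho h < 1.

Lemma contraction_range : 0 <= rho h < 1.
Proof. split; [apply Rlt_le, rho_pos | exact contracting]. Qed.

Definition orbit (k : nat) (x : M) : M := Nat.iter k (act h) x.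

Lemma orbit_succ k x : orbit (S k) x = act h (orbit k x).
Proof. reflexivity. Qed.

Lemma orbit_add n k x : orbit (n + k) x = orbit n (orbit k x).
Proof. apply Nat.iter_add. Qed.

Lemma orbit_dist k x y : d (orbit k x) (orbit k y) = rho h ^ k * d x y.
Proof.
  induction k as [|k IH].
  - unfold orbit; simpl. ring.
  - rewrite !orbit_succ, rho_hom, IH. simpl. ring.
Qed.

Lemma orbit_drift k x : d x (orbit k x) <= d x (act h x) / (1 - rho h).
Proof.
  set (S := d x (act h x) / (1 - rho h)).
  assert (S_fix : d x (act h x) + rho h * S = S) by (unfold S; field; lra).
  pose proof (rho_pos h) as h_pos.
  induction k as [|k IH].
  - unfold orbit; simpl. rewrite (dist_self metric).
    pose proof (dist_nonneg metric x (act h x)). nra.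
  - rewrite orbit_succ.
    pose proof (dist_triangle metric x (act h x) (act h (orbit k x))).
    rewrite rho_hom in *. nra.
Qed.

Lemma orbit_tail n m x : (n <= m)%nat ->
  d (orbit n x) (orbit m x) <= rho h ^ n * (d x (act h x) / (1 - rho h)).
Proof.
  intro nm. replace m with (n + (m - n))%nat by lia.
  rewrite orbit_add, orbit_dist. apply Rmult_le_compat_l; [apply pow_le, Rlt_le, rho_pos |].
  apply orbit_drift.
Qed.

Lemma orbit_cauchy x : cauchy d (fun k => orbit k x).
Proof.
  intros eps eps_pos.
  assert (S_nonneg : 0 <= d x (act h x) / (1 - rho h)).
  { apply Rmult_le_pos; [apply (dist_nonneg metric) | apply Rlt_le, Rinv_0_lt_compat; lra]. }
  destruct (pow_vanish contraction_range S_nonneg eps_pos) as [N HN].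
  exists N. intros n m Hn Hm.
  destruct (Nat.le_ge_cases n m) as [nm | mn].
  - eapply Rle_lt_trans; [apply orbit_tail, nm | apply HN, Hn].
  - rewrite (dist_sym metric).
    eapply Rle_lt_trans; [apply orbit_tail, mn | apply HN, Hm].
Qed.

(* Moving a point by [g y -> x] changes its [h]-displacement by [2 d(g y, x)];
   the displacement of [g y] is [rho g] times that of [y] since [G] is abelian. *)
Lemma drift_translate g x y :
  d x (act h x) <= 2 * d (act g y) x + rho g * d y (act h y).
Proof.
  pose proof (dist_triangle metric x (act g y) (act h x)) as t1.
  pose proof (dist_triangle metric (act g y) (act h (act g y)) (act h x)) as t2.
  rewrite (act_comm h g y), rho_hom, <- (act_comm h g y), rho_hom in t2.
  rewrite (dist_sym metric x (act g y)) in t1.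
  pose proof (rho_pos h). pose proof (dist_nonneg metric (act g y) x). nra.
Qed.

Section Completion.
Variables (X : Type) (dX : X -> X -> R) (i : M -> X).
Hypothesis completion : is_completion d dX i.

Lemma orbit_limit : exists omega, forall x, converges dX (fun k => i (orbit k x)) omega.
Proof.
  destruct completion as (metricX & completeX & iso & _).
  destruct inhabited_M as [a].
  assert (cau : cauchy dX (fun k => i (orbit k a))).
  { intros eps eps_pos. destruct (orbit_cauchy a eps_pos) as [N HN].
    exists N. intros n m Hn Hm. rewrite iso. now apply HN. }
  destruct (completeX _ cau) as [omega lim]. exists omega.
  intros x eps eps_pos.
  destruct (pow_vanish contraction_range (dist_nonneg metric x a) (eps := eps / 2))
    as [N1 HN1]; [lra |].
  destruct (lim (eps / 2)) as [N2 HN2]; [lra |].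
  exists (Nat.max N1 N2). intros n Hn.
  pose proof (dist_triangle metricX (i (orbit n x)) (i (orbit n a)) omega).
  rewrite iso, orbit_dist in *.
  specialize (HN1 n ltac:(lia)). specialize (HN2 n ltac:(lia)). simpl in HN2. lra.
Qed.

Lemma dense_linear_bound z w K :
  0 <= K -> (forall x, dX z w <= K * dX (i x) z) -> z = w.
Proof.
  intros K_nonneg bound. destruct completion as (metricX & _ & _ & dense).
  apply (dist_le_zero metricX), Rle_plus_epsilon. intros eps eps_pos.
  destruct (dense z (eps / (K + 1))) as [x x_close]; [apply Rdiv_lt_0_compat; lra |].
  assert (eps / (K + 1) * (K + 1) = eps) by (field; lra).
  pose proof (bound x). pose proof (dist_nonneg metricX (i x) z). nra.
Qed.

Definition chart (p : M * R) : Prop :=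
  0 < snd p /\ exists V, compact_set d V /\ forall w, d (fst p) w < snd p -> V w.

(* Near a boundary point [z], a point of [g B(x_p, r_p / 2)] satisfies
   [rho g * r_p <= 4 d(x, z)]: otherwise [z] would be a limit of the compact
   set [g V_p], hence a point of [M]. *)
Lemma chart_gap z p g x :
  ~ (exists y, i y = z) -> chart p -> d (act g (fst p)) x < rho g * snd p / 2 ->
  rho g * snd p <= 4 * dX (i x) z.
Proof.
  intros z_out [r_pos [V [V_compact ball_V]]] x_near.
  destruct completion as (metricX & _ & iso & dense).
  apply Rnot_lt_le. intro gap. apply z_out.
  assert (lipschitz : forall w y, dX (i (act g w)) (i (act g y)) <= rho g * d w y)
    by (intros w y; rewrite iso, rho_hom; lra).
  assert (approach : forall eps, 0 < eps ->
            exists w, V w /\ dX (i (act g w)) z < eps).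
  { intros eps eps_pos.
    destruct (dense z (Rmin eps (rho g * snd p / 4))) as [x' x'_close].
    { apply Rmin_pos; [exact eps_pos | pose proof (rho_pos g); nra]. }
    pose proof (Rmin_l eps (rho g * snd p / 4)). pose proof (Rmin_r eps (rho g * snd p / 4)).
    exists (act (inv g) x'). rewrite act_inv_r. split; [| lra].
    apply ball_V, (Rmult_lt_reg_l (rho g)); [apply rho_pos |].
    rewrite <- rho_hom, act_inv_r.
    pose proof (dist_triangle metric (act g (fst p)) x x').
    pose proof (dist_triangle metricX (i x) z (i x')).
    rewrite iso, (dist_sym metricX z) in *. lra. }
  destruct (compact_lipschitz_closed metric metricX (fun w => i (act g w)) z
              (Rlt_le _ _ (rho_pos g)) V_compact lipschitz approach) as [w [_ Hw]].
  now exists (act g w).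
Qed.

Variable omega : X.
Hypothesis omega_limit : forall x, converges dX (fun k => i (orbit k x)) omega.

Lemma limit_dist_bound x : dX (i x) omega <= d x (act h x) / (1 - rho h).
Proof.
  destruct completion as (metricX & _ & iso & _).
  apply (limit_dist_le metricX (i x) (omega_limit x)). intro n.
  rewrite iso. apply orbit_drift.
Qed.

(* [omega] is not in [M]: it would be a fixed point of [h]. *)
Lemma limit_not_in_image : ~ exists y, i y = omega.
Proof.
  intros [y y_omega]. destruct completion as (metricX & _ & iso & _).
  destruct action as [act_id _].
  assert (to_omega : converges dX (fun n => i (orbit (S n) y)) omega).
  { intros eps eps_pos. destruct (omega_limit y eps_pos) as [N HN].
    exists N. intros n Hn. apply HN. lia. }
  assert (to_hy : converges dX (fun n => i (orbit (S n) y)) (i (act h y))).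
  { intros eps eps_pos. destruct (omega_limit y eps_pos) as [N HN].
    exists N. intros n Hn. specialize (HN n Hn).
    rewrite <- y_omega, iso in HN. rewrite iso, orbit_succ, rho_hom.
    pose proof (dist_nonneg metric (orbit n y) y). nra. }
  assert (fixed : act h y = y).
  { apply (dist_le_zero metric). rewrite <- iso, y_omega.
    rewrite (converges_unique metricX to_hy to_omega), (dist_self metricX). lra. }
  pose proof contracting as h_contr. rewrite (free fixed), ratio_id in h_contr. lra.
Qed.

Hypothesis loc_compact : locally_compact d.
Hypothesis cocompact : forall (I : Type) (U : I -> M -> Prop),
  (forall j, Defs.open_set d (U j)) ->
  (forall j g x, U j x -> U j (act g x)) ->
  (forall x, exists j, U j x) ->
  exists l : list I, forall x, exists j, In j l /\ U j x.

Lemma translate_cover : exists l : list (M * R), forall x,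
  exists p g, In p l /\ chart p /\ d (act g (fst p)) x < rho g * snd p / 2.
Proof.
  destruct action as [act_id act_mul].
  pose (U := fun p y => chart p /\ exists g, d (act g (fst p)) y < rho g * snd p / 2).
  destruct (cocompact U) as [l cover].
  - intros p y [p_chart [g y_near]].
    exists (rho g * snd p / 2 - d (act g (fst p)) y). split; [lra |].
    intros w w_near. split; [exact p_chart |]. exists g.
    pose proof (dist_triangle metric (act g (fst p)) y w). lra.
  - intros p f y [p_chart [g y_near]]. split; [exact p_chart |].
    exists (mul f g). rewrite act_mul, rho_hom, ratio_mul.
    pose proof (rho_pos f). nra.
  - intro y. destruct (loc_compact y) as [V [V_compact [r [r_pos ball_V]]]].
    exists (y, r). split; [split; [exact r_pos | now exists V] |].
    exists e. simpl. rewrite act_id, ratio_id, (dist_self metric). lra.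
  - exists l. intro x. destruct (cover x) as [p [p_in [p_chart [g x_near]]]].
    now exists p, g.
Qed.

Lemma boundary_point_is_limit z : ~ (exists y, i y = z) -> z = omega.
Proof.
  intro z_out. destruct completion as (metricX & _ & _ & _).
  destruct translate_cover as [l cover].
  destruct (list_upper_bound l (fun p => snd p + d (fst p) (act h (fst p))))
    as [B [B_nonneg B_bound]].
  destruct (list_positive_lower_bound l snd) as [rmin [rmin_pos rmin_bound]].
  pose proof (rho_pos h) as h_pos.
  set (c := / (rmin * (1 - rho h))).
  assert (c_pos : 0 < c) by (apply Rinv_0_lt_compat; nra).
  assert (c_eq : c * (rmin * (1 - rho h)) = 1) by (unfold c; field; nra).
  apply (dense_linear_bound (K := 1 + 4 * B * c)); [nra |].
  intro x. destruct (cover x) as [p [g [p_in [p_chart x_near]]]].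
  pose proof (chart_gap z_out p_chart x_near) as gap.
  pose proof (rmin_bound p p_in (proj1 p_chart)) as rmin_le.
  pose proof (B_bound p p_in) as B_p. simpl in B_p.
  pose proof (rho_pos g) as g_pos.
  assert (near_omega : dX (i x) omega * (1 - rho h) <= rho g * B).
  { pose proof (limit_dist_bound x) as bound.
    pose proof (drift_translate g x (fst p)) as drift.
    assert (bound' : dX (i x) omega * (1 - rho h) <= d x (act h x)).
    { replace (d x (act h x)) with (d x (act h x) / (1 - rho h) * (1 - rho h))
        by (field; lra).
      apply Rmult_le_compat_r; lra. }
    pose proof (dist_nonneg metric (fst p) (act h (fst p))). nra. }
  assert (scale : rho g * rmin <= 4 * dX (i x) z).
  { apply Rle_trans with (rho g * snd p); [apply Rmult_le_compat_l; lra | exact gap]. }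
  assert (far : dX (i x) omega <= 4 * B * c * dX (i x) z).
  { apply Rle_trans with (dX (i x) omega * (1 - rho h) * rmin * c).
    - right. replace (dX (i x) omega * (1 - rho h) * rmin * c)
        with (dX (i x) omega * (c * (rmin * (1 - rho h)))) by ring.
      rewrite c_eq. ring.
    - pose proof (Rmult_le_compat_r (rmin * c) _ _ ltac:(nra) near_omega).
      pose proof (Rmult_le_compat_r (B * c) _ _ ltac:(nra) scale). lra. }
  pose proof (dist_triangle metricX z (i x) omega) as triangle.
  rewrite (dist_sym metricX z (i x)) in triangle. lra.
Qed.
End Completion.
End Contraction.
End Homotheties.

Theorem mainTheorem2 (M G : Type) (d : M -> M -> R)
    (mul : G -> G -> G) (inv : G -> G) (e : G) (act : G -> M -> M) :
  inhabited M ->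
  cone_like d mul inv e act ->
  forall (X : Type) (dX : X -> X -> R) (i : M -> X),
    is_completion d dX i ->
    exists omega : X, (~ exists x, i x = omega) /\
      forall z : X, (~ exists x, i x = z) -> z = omega.
Proof.
  intros inhabited_M cone X dX i completion.
  destruct cone as (metric & loc_compact & group & _ & nontrivial & action & homothety
                    & free & _ & rigid & cocompact).
  destruct (ratio_exists act metric inhabited_M nontrivial free homothety)
    as [rho [rho_pos rho_hom]].
  destruct (contracting_element metric group action inhabited_M nontrivial free rigid
              rho rho_pos rho_hom) as [h contracting].
  destruct (orbit_limit act metric inhabited_M rho rho_pos rho_hom h contracting completion)
    as [omega omega_limit].
  exists omega. split.
  - exact (limit_not_in_image metric action inhabited_M nontrivial free rho rho_hom h
             contracting completion omega_limit).
  - intros z z_out.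
    exact (boundary_point_is_limit metric group action inhabited_M nontrivial free rigid
             rho rho_pos rho_hom h contracting completion omega_limit loc_compact cocompact
             z_out).
Qed.
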